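(* Let $P$ be a finite $(3+1)$-free poset. For every $P$-tableau $T$ (of any partition shape), $\mathbf u_{\mathrm{colword}(T)}\equiv\mathbf u_{\mathrm{diagword}(T)}\pmod{I^P_{\mathrm{plac}}}$.
   Context: $a<_Pb$: strict order; $a\sim_Pb$: incomparable or equal. $\mathcal{U}_P=\mathbb{Z}\langle u_a:a\in P\rangle$, $\mathbf u_w=u_{w_1}\cdots u_{w_m}$. $I^P_{\mathrm{plac}}$ is generated by $u_bu_au_c-u_bu_cu_a$ ($a<_Pb$, $c\not<_Pb$, $a<_Pc$), $u_cu_au_b-u_au_cu_b$ ($b\not<_Pa$, $b<_Pc$, $a<_Pc$), $u_cu_au_b-u_bu_cu_a$ ($a\sim_Pb$, $b\sim_Pc$, $a<_Pc$). A $P$-tableau is a filling $T$ of a Young diagram (English notation) with $T(1,c)<_PT(2,c)<_P\cdots$ down each column and $T(r,c+1)\not<_PT(r,c)$ along each row. $\mathrm{colword}(T)$ reads each column bottom to top, columns left to right. $\mathrm{diagword}(T)$ reads each diagonal $\{(r,c):c-r=\text{const}\}$ in order of increasing $r$, concatenating diagonals in order of increasing $c-r$. *)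

From HB Require Import structures.
From mathcomp Require Import all_boot all_order all_algebra.
Set Implicit Arguments. Unset Strict Implicit. Unset Printing Implicit Defensive.
Import Order.TTheory GRing.Theory Num.Theory.
Local Open Scope order_scope.

Section Defs.
Context {d : Order.disp_t} {P : finPOrderType d}.

Definition simP (a b : P) : bool := ~~ (a < b) && ~~ (b < a).

Definition free31 : Prop :=
  ~ exists a b c x : P, [/\ a < b, b < c, ~~ (a >=< x), ~~ (b >=< x) & ~~ (c >=< x)].

(* Elements of U_P = Z<u_a : a in P> are represented as their coefficient
   functions on words (finitely supported in all uses).  mon w = u_w. *)
Definition mon (w : seq P) : seq P -> int := fun v => Posz (v == w).

(* The binomial generators u_l - u_r of I^P_plac, given as pairs (l, r) of words *)
Definition plac_gen (l r : seq P) : Prop :=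
  (exists a b c : P, [/\ a < b, ~~ (c < b), a < c, l = [:: b; a; c] & r = [:: b; c; a]])
  \/ (exists a b c : P, [/\ ~~ (b < a), b < c, a < c, l = [:: c; a; b] & r = [:: a; c; b]])
  \/ (exists a b c : P, [/\ simP a b, simP b c, a < c, l = [:: c; a; b] & r = [:: b; c; a]]).

(* f lies in the two-sided ideal generated by the generators: f is a finite
   Z-linear combination of elements u_x (u_l - u_r) u_y = u_{x l y} - u_{x r y}. *)
Definition in_plac_ideal (f : seq P -> int) : Prop :=
  exists s : seq (int * seq P * (seq P * seq P) * seq P),
    (forall t, t \in s -> plac_gen t.1.2.1 t.1.2.2) /\
    forall v, f v = (\sum_(t <- s)
        t.1.1.1 * (mon (t.1.1.2 ++ t.1.2.1 ++ t.2) v - mon (t.1.1.2 ++ t.1.2.2 ++ t.2) v))%R.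

Definition plac_congr (v w : seq P) : Prop :=
  in_plac_ideal (fun x => (mon v x - mon w x)%R).

(* Tableaux are lists of rows (English notation, row 0 on top).
   Entry T(r,c) = nth (nth [::] T r) c (0-indexed). *)
Definition entry (T : seq (seq P)) (r c : nat) : option P := onth (nth [::] T r) c.

Definition is_Ptableau (T : seq (seq P)) : Prop :=
  [/\ sorted geq (map size T),
      all (fun row => 0 < size row)%N T,
      (forall r c a b, entry T r c = Some a -> entry T r.+1 c = Some b -> a < b)
      & (forall r c a b, entry T r c = Some a -> entry T r c.+1 = Some b -> ~~ (b < a))].

Definition column (T : seq (seq P)) (c : nat) : seq P := pmap (fun row => onth row c) T.

Definition colword (T : seq (seq P)) : seq P :=
  flatten [seq rev (column T c) | c <- iota 0 (size (nth [::] T 0))].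

(* diagonal with c - r = k - size T, read by increasing r *)
Definition diagonal (T : seq (seq P)) (k : nat) : seq P :=
  pmap (fun r => if (size T <= r + k)%N then entry T r (r + k - size T) else None)
       (iota 0 (size T)).

Definition diagword (T : seq (seq P)) : seq P :=
  flatten [seq diagonal T k | k <- iota 0 (size T + size (nth [::] T 0))].

End Defs.

(* Read bottom to top, column j of a P-tableau is a strictly decreasing chain, and the
   diagonal word of the columns >= j arises from that of the columns >= j+1 by putting each
   entry of column j in front of the rest of its diagonal.  Moving the chain into place needs
   only the relation u_b u_a u_c = u_b u_c u_a: an entry y of a later diagonal travels left
   past the chain elements a above-left of it, and a < y because (3+1)-freeness lets the
   column inequalities propagate across the weak row conditions. *)
From HB Require Import structures.
From mathcomp Require Import all_boot all_order all_algebra.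
From mathcomp Require Import zify ring.
Set Implicit Arguments. Unset Strict Implicit. Unset Printing Implicit Defensive.
Import Order.TTheory GRing.Theory.

Section SeqLemmas.
Variable A : Type.

Definition ocons (o : option A) (s : seq A) : seq A := if o is Some x then x :: s else s.

Lemma pmap_iotaS (f : nat -> option A) a L :
  pmap f (iota a L.+1) = ocons (f a) (pmap f (iota a.+1 L)).
Proof. by rewrite /=; case: (f a). Qed.

Lemma pmap_none (T : eqType) (f : T -> option A) s :
  {in s, forall r, f r = None} -> pmap f s = [::].
Proof.
elim: s => //= a s IH fs0; rewrite fs0 ?mem_head // IH // => r rs.
by rewrite fs0 // inE rs orbT.
Qed.

Lemma pmap_map (T U : Type) (f : U -> option A) (h : T -> U) s :
  pmap f (map h s) = pmap (f \o h) s.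
Proof. by elim: s => //= a s ->. Qed.

Lemma flatten_map_nil (T : Type) (f : T -> seq A) s :
  (forall k, f k = [::]) -> flatten (map f s) = [::].
Proof. by move=> f0; elim: s => //= k s ->; rewrite f0. Qed.

Lemma pmap_iota_ocons (f g : nat -> option A) r0 a L :
  (forall r, r < r0 -> f r = None) -> (forall r, r < r0 -> g r = None) ->
  (forall r, r0 < r -> f r = g r) -> g r0 = None ->
  pmap f (iota a L) = ocons (if a <= r0 < a + L then f r0 else None) (pmap g (iota a L)).
Proof.
move=> f0 g0 fg gr0; elim: L a => [|L IH] a.
  by rewrite addn0 /=; case: (leqP a r0) => //= h; rewrite ltnNge h.
rewrite !pmap_iotaS IH; case: (ltngtP a r0) => ar0.
- by rewrite f0 // g0 //= addSnnS.
- by rewrite fg.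
- by subst r0; rewrite gr0 /= addnS ltnS leq_addr.
Qed.

Lemma pmap_iota_rev (F : nat -> option A) p a L : a + L <= p.+1 ->
  pmap (fun k => if k <= p then F (p - k) else None) (iota a L)
  = rev (pmap F (iota (p.+1 - a - L) L)).
Proof.
elim: L a => [|L IH] a h //; rewrite pmap_iotaS IH; last by lia.
have -> : a <= p by lia.
have -> : p.+1 - a.+1 - L = p.+1 - a - L.+1 by lia.
rewrite -(addn1 L) iotaD pmap_cat rev_cat /=.
have -> : p.+1 - a - (L + 1) + L = p - a by lia.
by case: (F (p - a)).
Qed.

End SeqLemmas.

Lemma pairwise_pmap_iota (T : eqType) (R : rel T) (f : nat -> option T) a L :
  (forall r1 r2 y1 y2, r1 < r2 -> f r1 = Some y1 -> f r2 = Some y2 -> R y1 y2) ->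
  pairwise R (pmap f (iota a L)).
Proof.
move=> HR; elim: L a => [|L IH] a //; rewrite pmap_iotaS.
case fa: (f a) => [y|] /=; last exact: IH.
rewrite IH andbT; apply/allP => z; rewrite mem_pmap => /mapP [r + fr].
by rewrite mem_iota => /andP [ar _]; apply: (HR a r).
Qed.

Section PlacRewriting.
Context {disp : Order.disp_t} {P : porderType disp}.
Local Open Scope order_scope.

(* Contextual closure of the first family of generators of I^P_plac, oriented
   u_b u_a u_c -> u_b u_c u_a. *)
Inductive plac_rw : seq P -> seq P -> Prop :=
| plac_rw_refl w : plac_rw w w
| plac_rw_step x y a b c w : a < b -> ~~ (c < b) -> a < c ->
    plac_rw (x ++ [:: b; c; a] ++ y) w -> plac_rw (x ++ [:: b; a; c] ++ y) w.

Lemma plac_rw_trans u v w : plac_rw u v -> plac_rw v w -> plac_rw u w.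
Proof.
elim=> // x y a b c w' ab cb ac _ IH vw.
exact: plac_rw_step ab cb ac (IH vw).
Qed.

Lemma plac_rw_catl p v w : plac_rw v w -> plac_rw (p ++ v) (p ++ w).
Proof.
elim=> [w'|x y a b c w' ab cb ac _ IH]; first exact: plac_rw_refl.
by rewrite (catA p x); apply: (plac_rw_step ab cb ac); rewrite -catA.
Qed.

Lemma plac_rw_catr q v w : plac_rw v w -> plac_rw (v ++ q) (w ++ q).
Proof.
elim=> [w'|x y a b c w' ab cb ac _ IH]; first exact: plac_rw_refl.
rewrite -!catA /=; apply: (@plac_rw_step x (y ++ q) a b c) ab cb ac _.
by move: IH; rewrite -!catA.
Qed.

Definition ngt (a b : P) : bool := ~~ (a > b).

Lemma plac_rw_slide w A y : path >%O w A -> {in A, forall x, x < y} -> ngt w y ->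
  plac_rw (w :: A ++ [:: y]) (w :: y :: A).
Proof.
elim: A w => [|x A IH] w /=; first by move=> *; exact: plac_rw_refl.
case/andP=> xw pA Ay yw.
have xy : x < y by apply: Ay; rewrite mem_head.
apply: (@plac_rw_trans _ (w :: x :: y :: A)).
  apply: (plac_rw_catl [:: w]); apply: IH => //; last by rewrite /ngt lt_gtF.
  by move=> z zA; apply: Ay; rewrite inE zA orbT.
exact: (@plac_rw_step [::] A x w y _ xw yw xy (plac_rw_refl _)).
Qed.

Lemma plac_rw_slide_block w A G : path >%O w A ->
  {in A & G, forall x y, x < y} -> path ngt w G ->
  plac_rw (w :: A ++ G) (w :: G ++ A).
Proof.
elim: G w => [|y G IH] w pA AG /=; first by rewrite cats0 => _; exact: plac_rw_refl.
case/andP=> wy pG.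
have Ay : {in A, forall x, x < y} by move=> x xA; apply: AG; rewrite ?mem_head.
apply: (@plac_rw_trans _ (w :: y :: A ++ G)).
  have -> : w :: A ++ y :: G = (w :: A ++ [:: y]) ++ G by rewrite /= -catA.
  exact: (plac_rw_catr G (plac_rw_slide pA Ay wy)).
apply: (plac_rw_catl [:: w]); apply: IH => //.
- rewrite path_sortedE; last exact: rev_trans lt_trans.
  by rewrite (path_sorted pA) andbT; apply/allP.
- by move=> x z xA zG; apply: AG; rewrite // inE zG orbT.
Qed.

Lemma plac_rw_interleave (x : nat -> option P) (G : nat -> seq P) a L :
  (forall k k' v v', (k < k')%N -> x k = Some v -> x k' = Some v' -> v' < v) ->
  (forall k k' v' y, (k < k')%N -> x k' = Some v' -> y \in G k -> v' < y) ->
  (forall k v, x k = Some v -> pairwise ngt (v :: G k)) ->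
  (forall k, x k = None -> G k = [::] \/ forall k', (k < k')%N -> x k' = None) ->
  plac_rw (pmap x (iota a L) ++ flatten (map G (iota a L)))
          (flatten [seq ocons (x k) (G k) | k <- iota a L]).
Proof.
move=> x_decr x_lt_G x_ngt_G x_none; elim: L a => [|L IH] a /=; first exact: plac_rw_refl.
set A := pmap x (iota a.+1 L); have := IH a.+1; rewrite -/A => IHa.
case xa: (x a) => [v|] /=.
  have A_lt_v : {in A, forall u, u < v}.
    move=> u; rewrite mem_pmap => /mapP [k]; rewrite mem_iota => /andP [ak _] xk.
    exact: (x_decr a k).
  have vA : path >%O v A.
    rewrite path_sortedE; last exact: rev_trans lt_trans.
    apply/andP; split; first exact/allP.
    apply/pairwise_sorted/pairwise_pmap_iota => k k' u u' kk' xk xk'.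
    exact: (x_decr k k').
  set rest := flatten (map G (iota a.+1 L)).
  apply: (@plac_rw_trans _ ((v :: G a) ++ A ++ rest)).
    have -> : v :: A ++ G a ++ rest = (v :: A ++ G a) ++ rest by rewrite /= catA.
    have -> : (v :: G a) ++ A ++ rest = (v :: G a ++ A) ++ rest by rewrite /= catA.
    apply: plac_rw_catr; apply: plac_rw_slide_block => //.
      move=> u y; rewrite mem_pmap => /mapP [k]; rewrite mem_iota => /andP [ak _] xk Gy.
      exact: (x_lt_G a k).
    by have := pairwise_sorted (x_ngt_G a v xa).
  exact: plac_rw_catl.
case: (x_none a xa) => [-> //|later_none].
have A0 : A = [::].
  by apply: pmap_none => k; rewrite mem_iota => /andP [ak _]; apply: later_none.
by move: IHa; rewrite A0 /=; apply: plac_rw_catl.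
Qed.

End PlacRewriting.

Lemma plac_rw_congr (d : Order.disp_t) (P : finPOrderType d) (v w : seq P) :
  plac_rw v w -> plac_congr v w.
Proof.
elim=> [w'|x y a b c w' ab cb ac _ [s [s_gen s_sum]]].
  by exists [::]; split=> // z; rewrite big_nil subrr.
exists ((1%R, x, ([:: b; a; c], [:: b; c; a]), y) :: s); split.
  by move=> t; rewrite inE => /orP [/eqP -> /=|/s_gen //]; left; exists a, b, c.
by move=> z; rewrite big_cons -s_sum /= mul1r; ring.
Qed.

Lemma free31_lt (d : Order.disp_t) (P : finPOrderType d) (a b c y : P) :
  @free31 d P -> (a < b -> b < c -> ~~ (y < c) -> a < y)%O.
Proof.
move=> F31 ab bc yc; have ac := lt_trans ab bc.
have [|] := boolP ((a >=< y) || (b >=< y) || (c >=< y))%O; last first.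
  move=> /norP [/norP [ay b_y] cy].
  by exfalso; apply: F31; exists a, b, c, y.
rewrite /Order.comparable.
case/orP=> [/orP [] |] /orP [] h.
- by rewrite lt_neqAle h andbT; apply/eqP => ay; rewrite -ay ac in yc.
- by rewrite (le_lt_trans h ac) in yc.
- exact: lt_le_trans ab h.
- by rewrite (le_lt_trans h bc) in yc.
- exact: lt_le_trans ac h.
- by move: yc; rewrite lt_neqAle h andbT negbK => /eqP ->.
Qed.

Section Tableau.
Context {d : Order.disp_t} {P : finPOrderType d}.
Variables (x0 : P) (T : seq (seq P)).
Hypothesis T_tab : is_Ptableau T.

Local Notation n := (size T).
Local Notation m := (size (nth [::] T 0)).

Definition row_size r := size (nth [::] T r).
Definition tab r c := nth x0 (nth [::] T r) c.
Definition cell r c := c < row_size r.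

Lemma entryE r c : entry T r c = if cell r c then Some (tab r c) else None.
Proof.
rewrite /entry /cell /tab /row_size onthE.
by case: ltnP => h; [rewrite (nth_map x0) | rewrite nth_default // size_map].
Qed.

Lemma leq_row_size r1 r2 : r1 <= r2 -> row_size r2 <= row_size r1.
Proof.
move=> r12; have [r2n|] := ltnP r2 n; last by move=> nr2; rewrite /row_size nth_default.
case: T_tab => sorted_sizes _ _ _.
have geq_trans : transitive geq by move=> b a c ab bc; apply: leq_trans bc ab.
have := sorted_leq_nth geq_trans (@leqnn) 0 sorted_sizes r1 r2.
by rewrite !inE size_map !(nth_map [::]) //; [apply; lia | lia].
Qed.

Lemma cell_le r c r' c' : cell r c -> r' <= r -> c' <= c -> cell r' c'.
Proof. by rewrite /cell => rc rr cc; have := leq_row_size rr; lia. Qed.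

Lemma cell_row_lt r c : cell r c -> r < n.
Proof. by rewrite /cell /row_size; case: (ltnP r n) => // nr; rewrite nth_default. Qed.

Lemma cell_col_lt r c : cell r c -> c < m.
Proof. by move/cell_le/(_ (leq0n r) (leqnn c)). Qed.

Lemma entry_out_rows r c : n <= r -> entry T r c = None.
Proof. by move=> nr; rewrite entryE; case: ifP => // /cell_row_lt; lia. Qed.

Lemma tab_lt_down r c : cell r.+1 c -> (tab r c < tab r.+1 c)%O.
Proof.
move=> rc; case: T_tab => _ _ col_lt _; apply: (col_lt r c).
  by rewrite entryE (cell_le rc (leqnSn r) (leqnn c)).
by rewrite entryE rc.
Qed.

Lemma tab_ngt_right r c : cell r c.+1 -> ~~ (tab r c.+1 < tab r c)%O.
Proof.
move=> rc; case: T_tab => _ _ _ row_ngt; apply: (row_ngt r c).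
  by rewrite entryE (cell_le rc (leqnn r) (leqnSn c)).
by rewrite entryE rc.
Qed.

Lemma tab_lt_col i r c : i < r -> cell r c -> (tab i c < tab r c)%O.
Proof.
elim: r => // r IH; rewrite ltnS leq_eqVlt => /orP [/eqP -> | ir] rc; first exact: tab_lt_down.
apply: lt_trans (tab_lt_down rc); apply: IH => //; exact: cell_le rc (leqnSn r) (leqnn c).
Qed.

Hypothesis P_free31 : @free31 d P.

(* Induction on c - j: compare T(i,j) with T(r-1,c-1) and close the chain
   T(r-1,c-1) < T(r,c-1) with T(r,c) via (3+1)-freeness. *)
Lemma tab_lt_steep i j r c : j <= c -> i + (c - j) < r -> cell r c -> (tab i j < tab r c)%O.
Proof.
move=> /subnKC <-; rewrite addKn; elim: (c - j) r => [|k IH] r ir rc.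
  by rewrite addn0 in rc *; apply: tab_lt_col => //; lia.
case: r ir rc => [|r] ir rc; first lia.
have rc' : cell r.+1 (j + k) by apply: cell_le rc _ _; lia.
apply: (free31_lt P_free31 _ (tab_lt_down rc')).
- by apply: IH; [lia | apply: cell_le rc' _ _].
- by rewrite addnS; apply: tab_ngt_right; rewrite -addnS.
Qed.

Lemma tab_diag_ngt i j r c : i < r -> c + i = r + j -> cell r c -> ~~ (tab r c < tab i j)%O.
Proof.
case: c => [|c] ir diag rc; first lia.
have lt_left : (tab i j < tab r c)%O.
  by apply: tab_lt_steep; [lia | lia | apply: cell_le rc _ _].
by apply/negP => lt_ij; have := tab_ngt_right rc; rewrite (lt_trans lt_ij lt_left).
Qed.

Definition col_at j k := if k <= n + j then entry T (n + j - k) j else None.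
Definition diag_at j k r := if n + j <= r + k then entry T r (r + k - n) else None.
Definition diag_from j k := pmap (diag_at j k) (iota 0 n).
Definition diagword_from j := flatten [seq diag_from j k | k <- iota 0 (n + m)].

Lemma diag_fromS j k : diag_from j k = ocons (col_at j k) (diag_from j.+1 k).
Proof.
rewrite /diag_from /col_at; case: (leqP k (n + j)) => kj; last first.
  apply: eq_pmap => r; rewrite /diag_at.
  by rewrite !ifT //; lia.
rewrite (@pmap_iota_ocons _ _ (diag_at j.+1 k) (n + j - k)) /diag_at.
- congr ocons; rewrite add0n /=; case: ltnP => [rn | /entry_out_rows -> //].
  have -> : n + j - k + k = n + j by lia.
  by rewrite leqnn addKn.
- by move=> r rr; case: ifP => //; lia.
- by move=> r rr; case: ifP => //; lia.
- by move=> r rr; rewrite !ifT //; lia.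
- by case: ifP => //; lia.
Qed.

Lemma diagword_from0 : diagword_from 0 = diagword T.
Proof.
congr flatten; apply: eq_map => k; apply: eq_pmap => r.
by rewrite /diag_at addn0.
Qed.

Lemma diagword_from_width : diagword_from m = [::].
Proof.
apply: flatten_map_nil => k; apply: pmap_none => r _.
by rewrite /diag_at entryE; case: ifP => // ?; case: ifP => // /cell_col_lt; lia.
Qed.

Lemma rev_column j : j < m -> rev (column T j) = pmap (col_at j) (iota 0 (n + m)).
Proof.
move=> jm; have -> : column T j = pmap (fun r => entry T r j) (iota 0 n).
  by rewrite /column -{1}(mkseq_nth [::] T) /mkseq pmap_map.
have -> : n + m = j.+1 + n + (m - j.+1) by lia.
rewrite !iotaD !pmap_cat add0n.
rewrite (@pmap_none _ _ _ (iota 0 j.+1)); last first.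
  by move=> k; rewrite mem_iota /col_at => /andP [_ kj]; rewrite ifT ?entry_out_rows //; lia.
rewrite (@pmap_none _ _ _ (iota _ (m - j.+1))); last first.
  by move=> k; rewrite mem_iota /col_at => /andP [kj _]; rewrite ifF //; lia.
rewrite cats0 /col_at (@pmap_iota_rev _ (fun r => entry T r j)); last by lia.
by have -> : (n + j).+1 - j.+1 - n = 0 by lia.
Qed.

Lemma col_atP j k v : col_at j k = Some v ->
  [/\ k <= n + j, cell (n + j - k) j & v = tab (n + j - k) j].
Proof. by rewrite /col_at; case: ifP => // kj; rewrite entryE; case: ifP => // rc [<-]. Qed.

Lemma diag_atP j k r y : diag_at j k r = Some y ->
  [/\ n + j <= r + k, cell r (r + k - n) & y = tab r (r + k - n)].
Proof. by rewrite /diag_at; case: ifP => // rk; rewrite entryE; case: ifP => // rc [<-]. Qed.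

Lemma mem_diag_from j k y : y \in diag_from j k ->
  exists r, [/\ n + j <= r + k, cell r (r + k - n) & y = tab r (r + k - n)].
Proof. by rewrite mem_pmap => /mapP [r _ /esym/diag_atP]; exists r. Qed.

Lemma col_at_decr j k k' v v' :
  k < k' -> col_at j k = Some v -> col_at j k' = Some v' -> (v' < v)%O.
Proof.
move=> kk' /col_atP [kj rc ->] /col_atP [k'j r'c ->].
by apply: tab_lt_col => //; lia.
Qed.

Lemma col_at_lt_diag_from j k k' v y :
  k < k' -> col_at j k' = Some v -> y \in diag_from j.+1 k -> (v < y)%O.
Proof.
move=> kk' /col_atP [k'j _ ->] /mem_diag_from [r [rk rc ->]].
by apply: tab_lt_steep => //; lia.
Qed.

Lemma col_at_diag_from_ngt j k v :
  col_at j k = Some v -> pairwise ngt (v :: diag_from j.+1 k).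
Proof.
move=> /col_atP [kj rc ->]; rewrite pairwise_cons; apply/andP; split.
  apply/allP => y /mem_diag_from [r [rk rc' ->]].
  by apply: tab_diag_ngt => //; lia.
apply: pairwise_pmap_iota => r1 r2 y1 y2 r12 /diag_atP [r1k _ ->] /diag_atP [r2k rc2 ->].
by apply: tab_diag_ngt => //; lia.
Qed.

Lemma col_at_none j k : col_at j k = None ->
  diag_from j.+1 k = [::] \/ forall k', k < k' -> col_at j k' = None.
Proof.
rewrite /col_at; case: (leqP k (n + j)) => kj colj; last first.
  by right => k' kk'; rewrite ifF //; lia.
left; apply: pmap_none => r _; rewrite /diag_at; case: ifP => // rk.
rewrite entryE; case: ifP => // rc; move: colj; rewrite entryE.
by rewrite (cell_le rc (_ : n + j - k <= r) (_ : j <= r + k - n)) //; lia.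
Qed.

Lemma plac_rw_column_step j : j < m ->
  plac_rw (rev (column T j) ++ diagword_from j.+1) (diagword_from j).
Proof.
move=> jm; rewrite rev_column //.
have -> : diagword_from j =
    flatten [seq ocons (col_at j k) (diag_from j.+1 k) | k <- iota 0 (n + m)].
  by congr flatten; apply: eq_map => k; rewrite diag_fromS.
apply: plac_rw_interleave.
- exact: col_at_decr.
- exact: col_at_lt_diag_from.
- exact: col_at_diag_from_ngt.
- exact: col_at_none.
Qed.

Lemma plac_rw_colword_prefix j : j <= m ->
  plac_rw (flatten [seq rev (column T c) | c <- iota 0 j] ++ diagword_from j) (diagword_from 0).
Proof.
elim: j => [|j IH] jm; first exact: plac_rw_refl.
rewrite -addn1 iotaD map_cat flatten_cat /= cats0 -catA.
apply: plac_rw_trans (IH _); last lia.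
apply: plac_rw_catl.
by rewrite add0n addn1; apply: plac_rw_column_step.
Qed.

Lemma plac_rw_colword_diagword : plac_rw (colword T) (diagword T).
Proof.
have := plac_rw_colword_prefix (leqnn m).
by rewrite diagword_from_width cats0 diagword_from0.
Qed.

End Tableau.

Theorem mainTheorem17 (d : Order.disp_t) (P : finPOrderType d) :
  @free31 d P ->
  forall T : seq (seq P), is_Ptableau T -> plac_congr (colword T) (diagword T).
Proof.
move=> P_free31 T T_tab; apply: plac_rw_congr.
case: T T_tab => [|[|x0 row] T'] T_tab; first exact: plac_rw_refl.
  by case: T_tab.
exact: (plac_rw_colword_diagword x0 T_tab P_free31).
Qed.
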